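(* For any $\beta>0$, the mixing time of the column dynamics $\mathcal M^{\mathrm{col}}_n$ is $O(n^3\log n)$.
   Context: Fix $\beta>0$ and an integer $n\ge1$. Configurations are $\eta\in\Omega_n=\{0,\dots,n\}^n$ with boundary values $\eta(0)=\eta(n+1)=0$, and the SOS Gibbs distribution is $\mu(\eta)\propto\exp\{-\beta\sum_{i=1}^{n+1}|\eta(i-1)-\eta(i)|\}$. The column dynamics $\mathcal M^{\mathrm{col}}_n$ is the Markov chain on $\Omega_n$ that, from $\eta$, picks $i\in\{1,\dots,n\}$ uniformly at random and replaces $\eta(i)$ by $j\in\{0,\dots,n\}$ with probability proportional to $\mu(\eta^j)$, where $\eta^j$ is $\eta$ with $\eta(i)$ replaced by $j$. Mixing time: $\tau^{\mathrm{mix}}=\min\{t:\|\nu_t^\xi-\mu\|_{TV}\le 1/(2e)\ \forall\xi\in\Omega_n\}$, with $\nu_t^\xi$ the law at time $t$ started at $\xi$. *)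

From HB Require Import structures.
From mathcomp Require Import all_boot all_order all_algebra.
From mathcomp Require Import all_classical all_reals all_analysis.
Set Implicit Arguments. Unset Strict Implicit. Unset Printing Implicit Defensive.
Import Order.TTheory GRing.Theory Num.Theory.
Local Open Scope ring_scope.

Section SOS.
Variable R : realType.

(* Omega_n = {0,...,n}^n : eta(i) for i = 1..n is stored at index i-1 : 'I_n *)
Definition config (n : nat) := {ffun 'I_n -> 'I_n.+1}.

(* height at column k in {0,...,n+1}, with boundary eta(0) = eta(n+1) = 0 *)
Definition ht (n : nat) (eta : config n) (k : nat) : nat :=
  if k is k'.+1 then
    (if @insub nat (fun m => m < n)%N 'I_n k' is Some i then val (eta i) else 0%N)
  else 0%N.

Definition energy (n : nat) (eta : config n) : R :=
  \sum_(1 <= k < n.+2) `| (ht eta k.-1)%:R - (ht eta k)%:R |.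

Definition weight (beta : R) (n : nat) (eta : config n) : R :=
  expR (- (beta * energy eta)).

Definition gibbs (beta : R) (n : nat) (eta : config n) : R :=
  weight beta eta / \sum_(xi : config n) weight beta xi.

Definition update (n : nat) (eta : config n) (i : 'I_n) (j : 'I_n.+1) : config n :=
  [ffun k => if k == i then j else eta k].

Definition Pcol (beta : R) (n : nat) (eta eta' : config n) : R :=
  n%:R^-1 * \sum_(i : 'I_n) \sum_(j : 'I_n.+1)
    (if eta' == update eta i j then
       weight beta (update eta i j) /
       \sum_(j' : 'I_n.+1) weight beta (update eta i j')
     else 0).

Fixpoint law (beta : R) (n : nat) (t : nat) (xi : config n) : config n -> R :=
  match t with
  | 0%N => fun eta => if eta == xi then 1 else 0
  | t'.+1 => fun eta' => \sum_(eta : config n) law beta t' xi eta * Pcol beta eta eta'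
  end.

Definition tv_dist (n : nat) (p q : config n -> R) : R :=
  2^-1 * \sum_(eta : config n) `| p eta - q eta |.

Definition mixed (beta : R) (n t : nat) : Prop :=
  forall xi : config n, tv_dist (law beta t xi) (@gibbs beta n) <= (2 * expR 1)^-1.

Definition is_mixing_time (beta : R) (n t : nat) : Prop :=
  mixed beta n t /\ forall s : nat, (s < t)%N -> ~ mixed beta n s.

End SOS.

From HB Require Import structures.
From mathcomp Require Import all_boot all_order all_algebra.
From mathcomp Require Import all_classical all_reals all_analysis.
From mathcomp Require Import ring lra zify.
Import Order.TTheory GRing.Theory Num.Theory.
Local Open Scope ring_scope.
Set Implicit Arguments. Unset Strict Implicit. Unset Printing Implicit Defensive.

(* Contraction of Lipschitz constants for a weighted distance.  Measure configurations by
   d(eta, eta') = sum_i i (n + 1 - i) |eta(i) - eta'(i)|.  Resampling column i draws its new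
   height j with probability proportional to q^(|a - j| + |j - b|), q = exp(-beta), where a
   and b are the neighbouring heights; raising a by one shifts this law up by at most 1/2 in
   the monotone coupling, an explicit inequality between truncated geometric sums.  Averaging
   over the n columns, the boundary-vanishing concave weights i (n + 1 - i), whose second
   difference is -2 and which are at most n^2, turn this into: one step of the chain maps
   L-Lipschitz functions to L (1 - n^-3)-Lipschitz functions.  Since 1 <= d <= n^4 between
   distinct configurations, the total variation distance at time t is at most
   (1 - n^-3)^t n^4 <= exp(-t / n^3) n^4, which is below 1/(2e) from t ~ n^3 (4 ln n + 2). *)

Section GeometricSums.
Variable R : realFieldType.
Implicit Types (r : R) (m t : nat).

Definition geom_sum r t : R := \sum_(1 <= k < t.+1) r ^+ k.
Definition geom_wsum r t : R := \sum_(1 <= k < t.+1) k%:R * r ^+ k.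

Lemma geom_sum0 r : geom_sum r 0 = 0.
Proof. by rewrite /geom_sum big_geq. Qed.

Lemma geom_wsum0 r : geom_wsum r 0 = 0.
Proof. by rewrite /geom_wsum big_geq. Qed.

Lemma geom_sumS r t : geom_sum r t.+1 = geom_sum r t + r ^+ t.+1.
Proof. by rewrite /geom_sum big_nat_recr. Qed.

Lemma geom_wsumS r t : geom_wsum r t.+1 = geom_wsum r t + t.+1%:R * r ^+ t.+1.
Proof. by rewrite /geom_wsum big_nat_recr. Qed.

Lemma geom_sum_ge0 r t : 0 <= r -> 0 <= geom_sum r t.
Proof. by move=> r0; apply: sumr_ge0 => k _; apply: exprn_ge0. Qed.

Lemma geom_sumE r t : (1 - r) * geom_sum r t = r - r ^+ t.+1.
Proof.
elim: t => [|t IH]; first by rewrite geom_sum0 mulr0 expr1 subrr.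
rewrite geom_sumS mulrDr IH [r ^+ t.+2]exprS; ring.
Qed.

Lemma geom_wsumE r t : (1 - r) * geom_wsum r t = geom_sum r t - t%:R * r ^+ t.+1.
Proof.
elim: t => [|t IH]; first by rewrite geom_wsum0 geom_sum0 mulr0 mul0r subrr.
rewrite geom_wsumS geom_sumS mulrDr IH [r ^+ t.+2]exprS -natr1; ring.
Qed.

Lemma sumr_nat_id k : 2 * \sum_(0 <= d < k) (d%:R : R) = (k * k.-1)%:R.
Proof.
elim: k => [|k IH]; first by rewrite big_geq // mulr0.
rewrite big_nat_recr //= mulrDr IH; case: k {IH} => [|k] /=; first by rewrite mulr0 add0r.
by rewrite -natrM -natrD; congr (_%:R); lia.
Qed.

(* [d - m] truncates to 0 on [0, m]: a plateau of ones followed by a geometric tail. *)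
Lemma plateau_geom_sum r m t :
  \sum_(0 <= d < m.+1 + t) r ^+ (d - m) = m.+1%:R + geom_sum r t.
Proof.
elim: t => [|t IH].
  rewrite addn0 geom_sum0 addr0 (eq_big_nat _ _ (F2 := fun _ => 1)).
    by rewrite sumr_const_nat subn0.
  by move=> d /andP[_ hd]; have -> : (d - m = 0)%N by lia.
rewrite addnS big_nat_recr // IH geom_sumS.
have -> : (m.+1 + t - m = t.+1)%N by lia.
by rewrite addrA.
Qed.

Lemma plateau_geom_wsum r m t :
  \sum_(0 <= d < m.+1 + t) d%:R * r ^+ (d - m) =
    (m * m.+1)%:R / 2 + m%:R * geom_sum r t + geom_wsum r t.
Proof.
elim: t => [|t IH].
  rewrite addn0 geom_sum0 geom_wsum0 mulr0 !addr0.
  rewrite (eq_big_nat _ _ (F2 := fun d => d%:R)); last first.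
    move=> d /andP[_ hd]; have -> : (d - m = 0)%N by lia.
    by rewrite mulr1.
  by rewrite mulnC -[in RHS](sumr_nat_id m.+1); field.
rewrite addnS big_nat_recr // IH geom_sumS geom_wsumS.
have -> : (m.+1 + t - m = t.+1)%N by lia.
have -> : ((m.+1 + t)%:R : R) = m%:R + t.+1%:R by rewrite -natrD; congr _%:R; lia.
rewrite /=; ring.
Qed.

End GeometricSums.

Section CrossMomentPolynomials.
Variable R : realFieldType.

Lemma geom_tail_quad_ge0 (r P Q : R) : 0 <= r <= 1 -> 0 <= P <= r -> 0 <= Q <= r ->
  0 <= r * (1 - r) * (P + Q) + r * P ^+ 2 + Q ^+ 2 - (3 - r) * P * Q.
Proof.
move=> /andP[r0 r1] /andP[P0 Pr] /andP[Q0 Qr].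
have -> : r * (1 - r) * (P + Q) + r * P ^+ 2 + Q ^+ 2 - (3 - r) * P * Q =
    (1 - r) * (P * (r - Q) + Q * (r - P)) + (Q - P) * (Q - r * P) by ring.
have h1 : 0 <= (1 - r) * (P * (r - Q) + Q * (r - P)).
  by apply: mulr_ge0; [lra | apply: addr_ge0; apply: mulr_ge0; lra].
case: (lerP P Q) => hPQ; first by apply: addr_ge0 => //; apply: mulr_ge0; nra.
case: (lerP (r * P) Q) => hrP; last by apply: addr_ge0 => //; nra.
have : (P - Q) * (Q - r * P) <= (1 - r) * (P * (r - Q)) by nra.
have : 0 <= (1 - r) * (Q * (r - P)) by apply: mulr_ge0; nra.
nra.
Qed.

(* In the next two lemmas [(T, U)], [(B, V)] and [(Ta, Ua)] stand for
   [(geom_sum r k, geom_wsum r k)] for some [k], pinned down through [geom_sumE] and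
   [geom_wsumE] with [P] or [Q] equal to [r ^+ k.+1]; [mm] and [pp] are the lengths of
   the plateau of the column weight below and above the pinned height. *)
Lemma cross_moment_poly_lower (r mm t K T U B V P Q : R) :
  0 <= r < 1 -> 0 <= mm -> 0 <= t -> 0 <= K -> 0 <= P <= r -> 0 <= Q <= r ->
  0 <= T -> 0 <= B ->
  (1 - r) * T = r - P -> (1 - r) * U = T - t * P ->
  (1 - r) * B = r - Q -> (1 - r) * V = B - K * Q ->
  2 * (1 - r) * ((mm + 1 + T) * V + B * (mm * (mm + 1) / 2 + mm * T + U)) <=
    (mm + 1 + T + B) * (r * (mm + 1 + T) + B).
Proof.
move=> /andP[r0 r1] m0 t0 K0 PP QQ T0 B0 hT hU hB hV.
have eP : P = r - (1 - r) * T by lra.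
have eQ : Q = r - (1 - r) * B by lra.
have J_ge0 : 0 <= (B - T) * (B - r * T) + 2 * T * Q.
  have s_gt0 : 0 < (1 - r) ^+ 2 by rewrite exprn_gt0 // subr_gt0.
  rewrite -(pmulr_rge0 _ s_gt0).
  have -> : (1 - r) ^+ 2 * ((B - T) * (B - r * T) + 2 * T * Q) =
      r * (1 - r) * (P + Q) + r * P ^+ 2 + Q ^+ 2 - (3 - r) * P * Q.
    by rewrite eP eQ; ring.
  by apply: geom_tail_quad_ge0; lra.
rewrite -subr_ge0.
have -> : (mm + 1 + T + B) * (r * (mm + 1 + T) + B) -
    2 * (1 - r) * ((mm + 1 + T) * V + B * (mm * (mm + 1) / 2 + mm * T + U)) =
    (mm + 1) ^+ 2 * Q + 2 * mm * T * Q + ((B - T) * (B - r * T) + 2 * T * Q) +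
    2 * (mm + 1 + T) * K * Q + 2 * B * t * P.
  have -> : 2 * (1 - r) * ((mm + 1 + T) * V + B * (mm * (mm + 1) / 2 + mm * T + U)) =
      2 * (mm + 1 + T) * ((1 - r) * V) + 2 * B * ((1 - r) * (mm * (mm + 1) / 2 + mm * T)
      + (1 - r) * U) by field.
  by rewrite hV hU eQ eP; field.
have : 0 <= (mm + 1) ^+ 2 * Q by apply: mulr_ge0; [exact: sqr_ge0 | lra].
have : 0 <= mm * T * Q by apply: mulr_ge0; [apply: mulr_ge0 |]; lra.
have : 0 <= (mm + 1 + T) * K * Q by apply: mulr_ge0; [apply: mulr_ge0 |]; lra.
have : 0 <= B * t * P by apply: mulr_ge0; [apply: mulr_ge0 |]; lra.
lra.
Qed.

Lemma cross_moment_poly_upper (r pp M K Ta Ua T U P Q : R) :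
  0 <= r < 1 -> 0 <= pp -> 0 <= M -> 0 <= K -> 0 <= P <= r -> 0 <= Q <= r ->
  0 <= Ta -> 0 <= T ->
  (1 - r) * Ta = r - P -> (1 - r) * Ua = Ta - M * P ->
  (1 - r) * T = r - Q -> (1 - r) * U = T - K * Q ->
  2 * (1 - r) * ((1 + Ta) * (pp * (pp + 1) / 2 + pp * T + U) + (pp + T) * Ua) <=
    (1 + Ta + (pp + T)) * (r * (1 + Ta) + (pp + T)).
Proof.
move=> /andP[r0 r1] p0 M0 K0 PP QQ Ta0 T0 hTa hUa hT hU.
have eP : P = r - (1 - r) * Ta by lra.
have eQ : Q = r - (1 - r) * T by lra.
have J_ge0 : 0 <= r * (1 + Ta) ^+ 2 - (3 - r) * (1 + Ta) * T + T ^+ 2 + 2 * T.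
  have s_gt0 : 0 < (1 - r) ^+ 2 by rewrite exprn_gt0 // subr_gt0.
  rewrite -(pmulr_rge0 _ s_gt0).
  have -> : (1 - r) ^+ 2 * (r * (1 + Ta) ^+ 2 - (3 - r) * (1 + Ta) * T + T ^+ 2 + 2 * T) =
      (r * (1 - r) * (P + Q) + r * P ^+ 2 + Q ^+ 2 - (3 - r) * P * Q) + (1 - r) ^+ 2 * Q.
    by rewrite eP eQ; ring.
  apply: addr_ge0; first by apply: geom_tail_quad_ge0; lra.
  by apply: mulr_ge0; [exact: sqr_ge0 | lra].
rewrite -subr_ge0.
have -> : (1 + Ta + (pp + T)) * (r * (1 + Ta) + (pp + T)) -
    2 * (1 - r) * ((1 + Ta) * (pp * (pp + 1) / 2 + pp * T + U) + (pp + T) * Ua) =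
    (r * (1 + Ta) ^+ 2 - (3 - r) * (1 + Ta) * T + T ^+ 2 + 2 * T) + P * pp ^+ 2 +
    2 * P * pp + 2 * P * pp * T + 2 * (1 + Ta) * K * Q + 2 * (pp + T) * M * P.
  have -> : 2 * (1 - r) * ((1 + Ta) * (pp * (pp + 1) / 2 + pp * T + U) + (pp + T) * Ua) =
      2 * (1 + Ta) * ((1 - r) * (pp * (pp + 1) / 2 + pp * T) + (1 - r) * U) +
      2 * (pp + T) * ((1 - r) * Ua) by field.
  by rewrite hU hUa eQ eP; field.
have : 0 <= P * pp ^+ 2 by apply: mulr_ge0; [lra | exact: sqr_ge0].
have : 0 <= P * pp * T by apply: mulr_ge0; [apply: mulr_ge0 |]; lra.
have : 0 <= (1 + Ta) * K * Q by apply: mulr_ge0; [apply: mulr_ge0 |]; lra.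
have : 0 <= (pp + T) * M * P by apply: mulr_ge0; [apply: mulr_ge0 |]; lra.
have : 0 <= P * pp by apply: mulr_ge0; lra.
lra.
Qed.

End CrossMomentPolynomials.

Section ColumnLaw.
Variables (R : realFieldType) (q : R) (n : nat).
Hypotheses (q_gt0 : 0 < q) (q_lt1 : q < 1).

(* Gibbs weight, up to a constant, of height [j] at a column whose neighbours have heights
   [a] and [b], with [q = exp (- beta)]. *)
Definition col_weight (a b j : nat) : R := q ^+ (`|a - j| + `|j - b|)%N.

Definition col_avg (a b : nat) (g : nat -> R) : R :=
  (\sum_(0 <= j < n.+1) col_weight a b j * g j) / \sum_(0 <= j < n.+1) col_weight a b j.

Let r := q ^+ 2.

Let r_ge0 : 0 <= r. Proof. exact/exprn_ge0/ltW. Qed.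
Let r_lt1 : r < 1.
Proof. by rewrite /r expr2; have := q_gt0; have := q_lt1; nra. Qed.

Let r_itv : 0 <= r < 1. Proof. by rewrite r_ge0 r_lt1. Qed.

Lemma col_weight_gt0 a b j : 0 < col_weight a b j.
Proof. exact: exprn_gt0. Qed.

Lemma col_weightC a b j : col_weight a b j = col_weight b a j.
Proof. by rewrite /col_weight; congr (_ ^+ _); lia. Qed.

Lemma col_weightS a b j :
  q * col_weight a.+1 b j = (if (j <= a)%N then r else 1) * col_weight a b j.
Proof.
rewrite /col_weight -exprS; case: ifP => hj.
  by rewrite -exprD; congr (_ ^+ _); lia.
by rewrite mul1r; congr (_ ^+ _); move/negbT: hj; rewrite -ltnNge; lia.
Qed.

Lemma col_weight_sum_gt0 a b : 0 < \sum_(0 <= j < n.+1) col_weight a b j.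
Proof.
rewrite big_ltn // ltr_wpDr ?col_weight_gt0 //.
by apply: sumr_ge0 => j _; apply/ltW/col_weight_gt0.
Qed.

Let lo_mass a b := \sum_(0 <= j < a.+1) col_weight a b j.
Let hi_mass a b := \sum_(a.+1 <= j < n.+1) col_weight a b j.
Let lo_mom a b := \sum_(0 <= j < a.+1) (a - j)%:R * col_weight a b j.
Let hi_mom a b := \sum_(a.+1 <= j < n.+1) (j - a)%:R * col_weight a b j.

Lemma sum_below_rev (F : nat -> R) a :
  \sum_(0 <= j < a.+1) F j = \sum_(0 <= d < a.+1) F (a - d)%N.
Proof. by rewrite big_nat_rev; apply: eq_big_nat => d /andP[_ hd]; congr F; lia. Qed.

Lemma sum_above_shift (F : nat -> R) a : (a <= n)%N ->
  \sum_(a.+1 <= j < n.+1) F j = \sum_(1 <= d < (n - a).+1) F (a + d)%N.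
Proof.
move=> han; rewrite -[a.+1]add1n big_addn.
have -> : (n.+1 - a = (n - a).+1)%N by lia.
by apply: eq_big_nat => d _; rewrite addnC.
Qed.

Lemma lo_momE a b : lo_mom a b = \sum_(0 <= d < a.+1) d%:R * col_weight a b (a - d).
Proof.
rewrite /lo_mom sum_below_rev.
by apply: eq_big_nat => d /andP[_ hd]; congr (_%:R * _); lia.
Qed.

Lemma hi_momE a b : (a <= n)%N ->
  hi_mom a b = \sum_(1 <= d < (n - a).+1) d%:R * col_weight a b (a + d).
Proof.
move=> han; rewrite /hi_mom sum_above_shift //.
by apply: eq_big_nat => d _; congr (_%:R * _); lia.
Qed.

Lemma exprS_ge0_le (k : nat) : 0 <= r ^+ k.+1 <= r.
Proof.
rewrite exprn_ge0 //= exprS ler_piMr //; last exact: exprn_ile1 (ltW r_lt1).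
Qed.

Let scale_cross_ineq s (x X Y x' X' Y' : R) : 0 <= s ->
  x' = s * s * x -> X' = s * X -> Y' = s * Y ->
  2 * (1 - r) * x <= X * Y -> 2 * (1 - r) * x' <= X' * Y'.
Proof.
move=> s0 -> -> -> h; rewrite -subr_ge0.
have -> : s * X * (s * Y) - 2 * (1 - r) * (s * s * x) = s * s * (X * Y - 2 * (1 - r) * x).
  by ring.
by apply: mulr_ge0; [exact: mulr_ge0 | rewrite subr_ge0].
Qed.

Lemma cross_moment_lower_plateau a b : (a < n)%N -> (b <= a)%N ->
  2 * (1 - r) * (lo_mass a b * hi_mom a b + hi_mass a b * lo_mom a b) <=
    (lo_mass a b + hi_mass a b) * (r * lo_mass a b + hi_mass a b).
Proof.
move=> han hba; have hK : (a <= n)%N by lia.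
rewrite lo_momE hi_momE // /lo_mass /hi_mass sum_below_rev sum_above_shift //.
set K := (n - a)%N; pose m := (a - b)%N.
have wlo d : (d < a.+1)%N -> col_weight a b (a - d) = q ^+ m * r ^+ (d - m).
  by move=> hd; rewrite /col_weight /r -exprM -exprD; congr (_ ^+ _); rewrite /m; lia.
have whi d : col_weight a b (a + d) = q ^+ m * r ^+ d.
  by rewrite /col_weight /r -exprM -exprD; congr (_ ^+ _); rewrite /m; lia.
have ham : (m.+1 + b = a.+1)%N by rewrite /m; lia.
have -> : \sum_(0 <= d < a.+1) col_weight a b (a - d) = q ^+ m * (m.+1%:R + geom_sum r b).
  rewrite -plateau_geom_sum mulr_sumr ham.
  by apply: eq_big_nat => d /andP[_ hd]; rewrite wlo.
have -> : \sum_(0 <= d < a.+1) d%:R * col_weight a b (a - d) =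
    q ^+ m * ((m * m.+1)%:R / 2 + m%:R * geom_sum r b + geom_wsum r b).
  rewrite -plateau_geom_wsum mulr_sumr ham.
  by apply: eq_big_nat => d /andP[_ hd]; rewrite wlo // mulrCA.
have -> : \sum_(1 <= d < K.+1) col_weight a b (a + d) = q ^+ m * geom_sum r K.
  by rewrite /geom_sum mulr_sumr; apply: eq_big_nat => d _; rewrite whi.
have -> : \sum_(1 <= d < K.+1) d%:R * col_weight a b (a + d) = q ^+ m * geom_wsum r K.
  by rewrite /geom_wsum mulr_sumr; apply: eq_big_nat => d _; rewrite whi mulrCA.
have := @cross_moment_poly_lower _ r m%:R b%:R K%:R (geom_sum r b) (geom_wsum r b)
  (geom_sum r K) (geom_wsum r K) (r ^+ b.+1) (r ^+ K.+1).
move/(_ r_itv (ler0n _ _) (ler0n _ _) (ler0n _ _) (exprS_ge0_le _) (exprS_ge0_le _)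
  (geom_sum_ge0 _ r_ge0) (geom_sum_ge0 _ r_ge0) (geom_sumE _ _) (geom_wsumE _ _)
  (geom_sumE _ _) (geom_wsumE _ _)).
move/(scale_cross_ineq (exprn_ge0 m (ltW q_gt0))); apply; rewrite ?natrM -?natr1; ring.
Qed.

Lemma cross_moment_upper_plateau a b : (a < b)%N -> (b <= n)%N ->
  2 * (1 - r) * (lo_mass a b * hi_mom a b + hi_mass a b * lo_mom a b) <=
    (lo_mass a b + hi_mass a b) * (r * lo_mass a b + hi_mass a b).
Proof.
move=> hab hbn; have hK : (a <= n)%N by lia.
rewrite lo_momE hi_momE // /lo_mass /hi_mass sum_below_rev sum_above_shift //.
set K := (n - a)%N; pose p := (b - a)%N.
have wlo d : (d < a.+1)%N -> col_weight a b (a - d) = q ^+ p * r ^+ d.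
  by move=> hd; rewrite /col_weight /r -exprM -exprD; congr (_ ^+ _); rewrite /p; lia.
have whi d : col_weight a b (a + d) = q ^+ p * r ^+ (d - p).
  by rewrite /col_weight /r -exprM -exprD; congr (_ ^+ _); rewrite /p; lia.
have hKp : (p.+1 + (K - p) = K.+1)%N by rewrite /p /K; lia.
have -> : \sum_(0 <= d < a.+1) col_weight a b (a - d) = q ^+ p * (1 + geom_sum r a).
  rewrite big_ltn // /geom_sum mulrDr mulr_sumr wlo // expr0 mulr1; congr (_ + _).
  by apply: eq_big_nat => d /andP[_ hd]; rewrite wlo.
have -> : \sum_(0 <= d < a.+1) d%:R * col_weight a b (a - d) = q ^+ p * geom_wsum r a.
  rewrite big_ltn // /geom_wsum mul0r add0r mulr_sumr.
  by apply: eq_big_nat => d /andP[_ hd]; rewrite wlo // mulrCA.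
have -> : \sum_(1 <= d < K.+1) col_weight a b (a + d) = q ^+ p * (p%:R + geom_sum r (K - p)).
  have := plateau_geom_sum r p (K - p); rewrite hKp big_ltn // sub0n expr0 -natr1 => e.
  have -> : p%:R + geom_sum r (K - p) = \sum_(1 <= d < K.+1) r ^+ (d - p).
    by apply: (addIr 1); rewrite [RHS]addrC e; ring.
  by rewrite mulr_sumr; apply: eq_big_nat => d _; rewrite whi.
have -> : \sum_(1 <= d < K.+1) d%:R * col_weight a b (a + d) =
    q ^+ p * ((p * p.+1)%:R / 2 + p%:R * geom_sum r (K - p) + geom_wsum r (K - p)).
  have := plateau_geom_wsum r p (K - p); rewrite hKp big_ltn // mul0r add0r => <-.
  by rewrite mulr_sumr; apply: eq_big_nat => d _; rewrite whi mulrCA.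
have := @cross_moment_poly_upper _ r p%:R a%:R (K - p)%:R (geom_sum r a) (geom_wsum r a)
  (geom_sum r (K - p)) (geom_wsum r (K - p)) (r ^+ a.+1) (r ^+ (K - p).+1).
move/(_ r_itv (ler0n _ _) (ler0n _ _) (ler0n _ _) (exprS_ge0_le _) (exprS_ge0_le _)
  (geom_sum_ge0 _ r_ge0) (geom_sum_ge0 _ r_ge0) (geom_sumE _ _) (geom_wsumE _ _)
  (geom_sumE _ _) (geom_wsumE _ _)).
move/(scale_cross_ineq (exprn_ge0 p (ltW q_gt0))); apply; rewrite ?natrM -?natr1; ring.
Qed.

Lemma sum_antisym (s : seq nat) (h g : nat -> R) :
  \sum_(i <- s) \sum_(j <- s) h i * h j * (g i - g j) = 0.
Proof.
set X := LHS; suff : X = - X by lra.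
rewrite {1}/X exchange_big /X -sumrN; apply: eq_bigr => j _.
by rewrite -sumrN; apply: eq_bigr => i _; ring.
Qed.

(* Pairs on the same side of [a] cancel by antisymmetry. *)
Lemma sum_scaled_antisym (w g : nat -> R) (rho : R) a m : (a <= m)%N ->
  \sum_(0 <= i < m.+1) \sum_(0 <= j < m.+1)
     w i * ((if (j <= a)%N then rho else 1) * w j) * (g i - g j) =
  (1 - rho) * \sum_(0 <= i < a.+1) \sum_(a.+1 <= j < m.+1) w i * w j * (g i - g j).
Proof.
move=> am; pose F i j := w i * w j * (g i - g j).
have row i : \sum_(0 <= j < m.+1) w i * ((if (j <= a)%N then rho else 1) * w j) * (g i - g j) =
    rho * \sum_(0 <= j < a.+1) F i j + \sum_(a.+1 <= j < m.+1) F i j.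
  rewrite (big_cat_nat _ (n := a.+1)) //= mulr_sumr; congr (_ + _).
    by apply: eq_big_nat => j /andP[_ hj]; rewrite /F ifT //; ring.
  by apply: eq_big_nat => j /andP[hj _]; rewrite /F ltn_geF // mul1r.
under eq_bigr do rewrite row.
rewrite (big_cat_nat _ (n := a.+1)) //= !big_split /= -!mulr_sumr.
have -> : \sum_(0 <= i < a.+1) \sum_(0 <= j < a.+1) F i j = 0 by exact: sum_antisym.
have -> : \sum_(a.+1 <= i < m.+1) \sum_(a.+1 <= j < m.+1) F i j = 0 by exact: sum_antisym.
have -> : \sum_(a.+1 <= i < m.+1) \sum_(0 <= j < a.+1) F i j =
    - \sum_(0 <= i < a.+1) \sum_(a.+1 <= j < m.+1) F i j.
  rewrite exchange_big -sumrN; apply: eq_bigr => i _.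
  by rewrite -sumrN; apply: eq_bigr => j _; rewrite /F; ring.
by rewrite /F; ring.
Qed.

Lemma col_weight_sum_split a b : (a <= n)%N ->
  \sum_(0 <= j < n.+1) col_weight a b j = lo_mass a b + hi_mass a b.
Proof. by move=> han; rewrite (big_cat_nat _ (n := a.+1)). Qed.

Lemma col_weight_sum_splitS a b : (a < n)%N ->
  q * \sum_(0 <= j < n.+1) col_weight a.+1 b j = r * lo_mass a b + hi_mass a b.
Proof.
move=> han; rewrite mulr_sumr (big_cat_nat _ (n := a.+1)) //=; last exact: ltnW.
rewrite /lo_mass /hi_mass mulr_sumr; congr (_ + _); apply: eq_big_nat => j /andP[hj hj'].
  by rewrite col_weightS ifT.
by rewrite col_weightS ltn_geF // mul1r.
Qed.

Lemma col_avg_subS a b (g : nat -> R) : (a < n)%N ->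
  col_avg a b g - col_avg a.+1 b g =
    (1 - r) * (\sum_(0 <= i < a.+1) \sum_(a.+1 <= j < n.+1)
                 col_weight a b i * col_weight a b j * (g i - g j))
    / ((lo_mass a b + hi_mass a b) * (r * lo_mass a b + hi_mass a b)).
Proof.
move=> han; have hK : (a <= n)%N by lia.
set w := col_weight a b; set w' := col_weight a.+1 b.
pose c j := if (j <= a)%N then r else 1.
have hw' j : q * w' j = c j * w j by exact: col_weightS.
have hZ := col_weight_sum_split b hK; have hZ' := col_weight_sum_splitS b han.
rewrite -/w -/w' in hZ hZ'.
have Z_gt0 := col_weight_sum_gt0 a b; have Z'_gt0 := col_weight_sum_gt0 a.+1 b.
rewrite -/w -/w' in Z_gt0 Z'_gt0.
have -> : col_avg a b g - col_avg a.+1 b g =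
    (\sum_(0 <= i < n.+1) \sum_(0 <= j < n.+1) w i * (c j * w j) * (g i - g j))
    / ((lo_mass a b + hi_mass a b) * (r * lo_mass a b + hi_mass a b)).
  rewrite -hZ -hZ' /col_avg -/w -/w'.
  set Z := \sum_(0 <= j < n.+1) w j; set Z' := \sum_(0 <= j < n.+1) w' j.
  have -> : \sum_(0 <= i < n.+1) \sum_(0 <= j < n.+1) w i * (c j * w j) * (g i - g j) =
      q * ((\sum_(0 <= j < n.+1) w j * g j) * Z' - Z * \sum_(0 <= j < n.+1) w' j * g j).
    rewrite [X in q * (X - _)]mulr_suml [X in q * (_ - X)]mulr_suml -sumrB mulr_sumr.
    apply: eq_bigr => i _; rewrite /Z' [X in q * (X - _)]mulr_sumr.
    rewrite [X in q * (_ - X)]mulr_sumr -sumrB mulr_sumr.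
    by apply: eq_bigr => j _; rewrite -hw'; ring.
  by field; rewrite !gt_eqF.
by congr (_ / _); exact: sum_scaled_antisym.
Qed.

Definition lipschitz_on (c : R) (g : nat -> R) :=
  forall i j, (i <= n)%N -> (j <= n)%N -> g i - g j <= c * (`|i - j|%N)%:R.

Lemma col_cross_lipschitz a b c g : (a <= n)%N -> 0 <= c -> lipschitz_on c g ->
  \sum_(0 <= i < a.+1) \sum_(a.+1 <= j < n.+1) col_weight a b i * col_weight a b j * (g i - g j)
    <= c * (lo_mass a b * hi_mom a b + hi_mass a b * lo_mom a b).
Proof.
move=> han c0 Hg.
have -> : lo_mass a b * hi_mom a b + hi_mass a b * lo_mom a b =
    \sum_(0 <= i < a.+1) \sum_(a.+1 <= j < n.+1)
      col_weight a b i * col_weight a b j * (j - i)%:R.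
  rewrite /lo_mass /lo_mom mulr_suml mulr_sumr -big_split; apply: eq_big_nat => i /andP[_ hia].
  rewrite /hi_mass /hi_mom mulr_sumr mulr_suml -big_split; apply: eq_big_nat => j /andP[hj _].
  have -> : ((j - i)%:R : R) = (j - a)%:R + (a - i)%:R by rewrite -natrD; congr _%:R; lia.
  by rewrite /=; ring.
rewrite mulr_sumr; apply: ler_sum_nat => i /andP[_ hia].
rewrite mulr_sumr; apply: ler_sum_nat => j /andP[hj hjn].
rewrite mulrCA; apply: ler_wpM2l; first by apply: mulr_ge0; apply/ltW/col_weight_gt0.
have -> : (j - i)%N = `|i - j|%N by lia.
by apply: Hg; lia.
Qed.

Lemma col_avg_subS_le a b c g : (a < n)%N -> (b <= n)%N -> 0 <= c -> lipschitz_on c g ->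
  col_avg a b g - col_avg a.+1 b g <= c / 2.
Proof.
move=> han hbn c0 Hg; have hK : (a <= n)%N by lia.
have Z_gt0 : 0 < lo_mass a b + hi_mass a b.
  by rewrite -col_weight_sum_split //; exact: col_weight_sum_gt0.
have Z'_gt0 : 0 < r * lo_mass a b + hi_mass a b.
  by rewrite -col_weight_sum_splitS //; apply: mulr_gt0 => //; exact: col_weight_sum_gt0.
rewrite col_avg_subS // ler_pdivrMr ?mulr_gt0 //.
have := col_cross_lipschitz b hK c0 Hg.
have : 2 * (1 - r) * (lo_mass a b * hi_mom a b + hi_mass a b * lo_mom a b) <=
    (lo_mass a b + hi_mass a b) * (r * lo_mass a b + hi_mass a b).
  case: (leqP b a) => hab; first exact: cross_moment_lower_plateau.
  exact: cross_moment_upper_plateau.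
have := r_lt1; nra.
Qed.

Lemma col_avgB a b g1 g2 :
  col_avg a b g1 - col_avg a b g2 = col_avg a b (fun j => g1 j - g2 j).
Proof. by rewrite /col_avg -mulrBl -sumrB; congr (_ / _); apply: eq_bigr => j _; ring. Qed.

Lemma col_avg_le a b g M : (forall j, (j <= n)%N -> g j <= M) -> col_avg a b g <= M.
Proof.
move=> gM; rewrite /col_avg ler_pdivrMr ?col_weight_sum_gt0 // mulr_sumr.
apply: ler_sum_nat => j /andP[_ hj]; rewrite [M * _]mulrC.
by apply: ler_wpM2l; [exact/ltW/col_weight_gt0 | exact: gM].
Qed.

Lemma col_avgC a b g : col_avg a b g = col_avg b a g.
Proof. by rewrite /col_avg; congr (_ / _); apply: eq_bigr => j _; rewrite col_weightC. Qed.

Lemma col_avgN a b g : col_avg a b (fun j => - g j) = - col_avg a b g.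
Proof. by rewrite /col_avg -mulNr -sumrN; congr (_ / _); apply: eq_bigr => j _; ring. Qed.

Lemma lipschitz_onN c g : lipschitz_on c g -> lipschitz_on c (fun j => - g j).
Proof. by move=> Hg i j hi hj; rewrite opprK [- _ + _]addrC distnC; apply: Hg. Qed.

Lemma col_avg_distS a b c g : (a < n)%N -> (b <= n)%N -> 0 <= c -> lipschitz_on c g ->
  `|col_avg a b g - col_avg a.+1 b g| <= c / 2.
Proof.
move=> han hbn c0 Hg; rewrite ler_norml col_avg_subS_le // andbT lerNl opprB.
by have := col_avg_subS_le han hbn c0 (lipschitz_onN Hg); rewrite !col_avgN opprK addrC.
Qed.

Lemma col_avg_dist_left a a' b c g : (a <= n)%N -> (a' <= n)%N -> (b <= n)%N -> 0 <= c ->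
  lipschitz_on c g -> `|col_avg a b g - col_avg a' b g| <= c * (`|a - a'|%N)%:R / 2.
Proof.
move=> + + hbn c0 Hg; wlog le_aa' : a a' / (a <= a')%N => [hwlog ha ha'|].
  case: (leqP a a') => h; first exact: hwlog.
  by rewrite distrC distnC; apply: hwlog => //; exact: ltnW.
move=> _; rewrite -(subnKC le_aa'); elim: (a' - a)%N => [|k IH] hk.
  by rewrite addn0 subrr distnn normr0 mulr0 mul0r.
have hstep := col_avg_distS (a := (a + k)%N) ltac:(lia) hbn c0 Hg.
have -> : `|a - (a + k.+1)|%N = (`|a - (a + k)| + 1)%N by lia.
rewrite addnS natrD mulrDr mulr1 mulrDl.
by apply: le_trans (ler_distD (col_avg (a + k) b g) _ _) _; rewrite lerD // IH //; lia.
Qed.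

Lemma col_avg_lipschitz a a' b b' c g :
  (a <= n)%N -> (a' <= n)%N -> (b <= n)%N -> (b' <= n)%N -> 0 <= c -> lipschitz_on c g ->
  col_avg a b g - col_avg a' b' g <= c * (`|a - a'| + `|b - b'|)%N%:R / 2.
Proof.
move=> ha ha' hb hb' c0 Hg; apply: le_trans (ler_norm _) _.
apply: le_trans (ler_distD (col_avg a' b g) _ _) _.
rewrite natrD mulrDr mulrDl lerD ?col_avg_dist_left // (col_avgC a') (col_avgC a').
exact: col_avg_dist_left.
Qed.

End ColumnLaw.

Section Heights.
Variable n : nat.
Implicit Types (eta : config n) (i : 'I_n) (j : 'I_n.+1).

Lemma ht_update eta i j k :
  ht (update eta i j) k = if k == i.+1 then val j else ht eta k.
Proof.
case: k => [|k] //=; rewrite eqSS.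
case: insubP => [u hu <-|hn]; first by rewrite ffunE (inj_eq val_inj); case: eqP.
by have -> : (k == i) = false by apply: contraNF hn => /eqP ->.
Qed.

Lemma ht_update_neq eta i j k : k != i.+1 -> ht (update eta i j) k = ht eta k.
Proof. by move=> h; rewrite ht_update (negbTE h). Qed.

Lemma htS eta i : ht eta i.+1 = eta i.
Proof. by rewrite /= valK. Qed.

Lemma ht_le eta k : (ht eta k <= n)%N.
Proof. by case: k => [|k] //=; case: insubP => [u _ _|_] //; rewrite -ltnS. Qed.

Lemma ht_out eta k : (n < k)%N -> ht eta k = 0%N.
Proof. by case: k => [|k] //= hk; case: insubP => [u|//]; rewrite ltnNge -ltnS hk. Qed.

End Heights.

Lemma normr_natB (R : numDomainType) (x y : nat) : `|x%:R - y%:R : R| = (`|x - y|%N)%:R.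
Proof.
case: (leqP x y) => h.
  by rewrite -opprB normrN -natrB // normr_nat distnEr.
by rewrite -natrB ?normr_nat ?distnEl // ltnW.
Qed.

Section Energy.
Variables (R : realType) (n : nat).
Implicit Types (eta : config n) (i : 'I_n).

Definition bond_energy eta (k : nat) : R := `|(ht eta k.-1)%:R - (ht eta k)%:R|.

(* Bond [k] joins the heights at [k.-1] and [k], and column [i] sits at height index [i.+1],
   so this is the energy of all bonds except [i.+1] and [i.+2]. *)
Definition energy_off eta i : R :=
  \sum_(1 <= k < i.+1) bond_energy eta k + \sum_(i.+3 <= k < n.+2) bond_energy eta k.

Lemma energy_col eta i :
  energy R eta = energy_off eta i + bond_energy eta i.+1 + bond_energy eta i.+2.
Proof.
have hi := ltn_ord i.
rewrite /energy /energy_off (big_cat_nat _ (n := i.+1)) //=; last by lia.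
rewrite (@big_ltn _ _ _ i.+1); last by lia.
rewrite (@big_ltn _ _ _ i.+2); last by lia.
by rewrite /bond_energy /=; ring.
Qed.

Lemma energy_off_update eta i j : energy_off (update eta i j) i = energy_off eta i.
Proof.
rewrite /energy_off; congr (_ + _); apply: eq_big_nat => k /andP[h1 h2];
  by rewrite /bond_energy !ht_update_neq //; apply/eqP; lia.
Qed.

Lemma weight_update (beta : R) eta i j :
  weight beta (update eta i j) =
    expR (- (beta * energy_off eta i)) * col_weight (expR (- beta)) (ht eta i) (ht eta i.+2) j.
Proof.
rewrite /weight (energy_col _ i) energy_off_update /bond_energy !succnK.
rewrite (ht_update_neq _ _ (k := i)); last by apply/eqP; lia.
rewrite (ht_update_neq _ _ (k := i.+2)); last by apply/eqP; lia.
rewrite ht_update eqxx !normr_natB -addrA -natrD mulrDr opprD expRD /col_weight.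
by congr (_ * _); rewrite -expRM_natl; congr expR; ring.
Qed.

End Energy.

Lemma update_update n (eta : config n) i j k : update (update eta i j) i k = update eta i k.
Proof. by apply/ffunP => x; rewrite !ffunE; case: (x == i). Qed.

Lemma update_id n (eta : config n) i : update eta i (eta i) = eta.
Proof. by apply/ffunP => x; rewrite !ffunE; case: eqP => // ->. Qed.

Lemma update_at n (eta : config n) i j : update eta i j i = j.
Proof. by rewrite ffunE eqxx. Qed.

Lemma sumr_ifeq (R : pzSemiRingType) (T : finType) (u : T) (c : R) (g : T -> R) :
  \sum_(x : T) (if x == u then c else 0) * g x = c * g u.
Proof.
rewrite (bigD1 u) // eqxx big1 /= ?addr0 // => x /negbTE ->.
by rewrite mul0r.
Qed.

Lemma sum_prod (R : nmodType) (T1 T2 : finType) (G : T1 * T2 -> R) :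
  \sum_(p : T1 * T2) G p = \sum_(x : T1) \sum_(y : T2) G (x, y).
Proof. by rewrite pair_bigA; apply: eq_bigr => -[]. Qed.

Section HeatBath.
Variables (R : realType) (beta : R) (n : nat).
Implicit Types (eta : config n) (i : 'I_n) (f : config n -> R).

Definition Pcol_op f eta : R := \sum_(eta' : config n) Pcol beta eta eta' * f eta'.

Fixpoint Pcol_iter (t : nat) f : config n -> R :=
  if t is t'.+1 then Pcol_iter t' (Pcol_op f) else f.

Definition col_partition eta i : R := \sum_(j : 'I_n.+1) weight beta (update eta i j).

Lemma weight_gt0 eta : 0 < weight beta eta.
Proof. exact: expR_gt0. Qed.

Lemma col_partition_gt0 eta i : 0 < col_partition eta i.
Proof.
rewrite /col_partition (bigD1 ord0) // ltr_wpDr ?weight_gt0 //.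
by apply: sumr_ge0 => j _; apply/ltW/weight_gt0.
Qed.

Lemma col_partition_update eta i j : col_partition (update eta i j) i = col_partition eta i.
Proof. by apply: eq_bigr => k _; rewrite update_update. Qed.

Lemma partition_gt0 : 0 < \sum_(xi : config n) weight beta xi.
Proof.
rewrite (bigD1 [ffun => ord0]) // ltr_wpDr ?weight_gt0 //.
by apply: sumr_ge0 => j _; apply/ltW/weight_gt0.
Qed.

Lemma gibbs_ge0 eta : 0 <= gibbs beta eta.
Proof. by apply: divr_ge0; apply/ltW; [exact: weight_gt0 | exact: partition_gt0]. Qed.

Lemma gibbs_sum1 : \sum_(eta : config n) gibbs beta eta = 1.
Proof. by rewrite /gibbs -mulr_suml mulfV // lt0r_neq0 // partition_gt0. Qed.

Lemma Pcol_opE f eta :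
  Pcol_op f eta = n%:R^-1 * \sum_i \sum_(j : 'I_n.+1)
     weight beta (update eta i j) / col_partition eta i * f (update eta i j).
Proof.
rewrite /Pcol_op /Pcol (eq_bigr (fun eta' => n%:R^-1 * \sum_i \sum_(j : 'I_n.+1)
    (if eta' == update eta i j then weight beta (update eta i j) / col_partition eta i
     else 0) * f eta')); last first.
  move=> eta' _; rewrite -mulrA mulr_suml; congr (_ * _).
  by apply: eq_bigr => i _; rewrite mulr_suml.
rewrite -mulr_sumr exchange_big; congr (_ * _); apply: eq_bigr => i _.
by rewrite exchange_big; apply: eq_bigr => j _; exact: sumr_ifeq.
Qed.

(* Detailed balance of a single column resampling: [(eta, j) |-> (eta^j, eta i)] is an
   involution preserving [weight eta * weight eta^j / col_partition eta i]. *)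
Lemma sum_weight_col_resample f i :
  \sum_eta weight beta eta * \sum_(j : 'I_n.+1)
     weight beta (update eta i j) / col_partition eta i * f (update eta i j) =
  \sum_eta weight beta eta * f eta.
Proof.
pose G p := weight beta p.1 * (weight beta (update p.1 i p.2) / col_partition p.1 i *
  f (update p.1 i p.2)).
pose h p := (update p.1 i p.2, p.1 i) : config n * 'I_n.+1.
have h_inv : involutive h by case=> eta j; rewrite /h /= update_update update_id update_at.
transitivity (\sum_p G p).
  by rewrite sum_prod; apply: eq_bigr => eta _; rewrite mulr_sumr.
rewrite (reindex_inj (inv_inj h_inv)) sum_prod; apply: eq_bigr => eta _.
rewrite (eq_bigr (fun j => weight beta (update eta i j) * (weight beta eta /
    col_partition eta i * f eta))); last first.
  by move=> j _; rewrite /G /h /= update_update update_id col_partition_update.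
rewrite -mulr_suml -/(col_partition eta i); field.
exact/lt0r_neq0/col_partition_gt0.
Qed.

Lemma gibbs_Pcol_op f : (0 < n)%N ->
  \sum_eta gibbs beta eta * Pcol_op f eta = \sum_eta gibbs beta eta * f eta.
Proof.
move=> n_gt0; rewrite /gibbs; set Z := \sum_(xi : config n) weight beta xi.
have Z_neq0 : Z != 0 by exact/lt0r_neq0/partition_gt0.
have n_neq0 : (n%:R : R) != 0 by rewrite pnatr_eq0 -lt0n.
rewrite (eq_bigr (fun eta => (Z * n%:R)^-1 * \sum_i weight beta eta * \sum_(j : 'I_n.+1)
    weight beta (update eta i j) / col_partition eta i * f (update eta i j))); last first.
  by move=> eta _; rewrite Pcol_opE -mulr_sumr; field; rewrite Z_neq0 n_neq0.
rewrite -mulr_sumr exchange_big /=.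
under eq_bigr do rewrite sum_weight_col_resample.
rewrite sumr_const card_ord -mulr_natr.
rewrite [RHS](eq_bigr (fun eta => Z^-1 * (weight beta eta * f eta))); last by move=> eta _; ring.
by rewrite -mulr_sumr; field; rewrite Z_neq0 n_neq0.
Qed.

Lemma gibbs_Pcol_iter t f : (0 < n)%N ->
  \sum_eta gibbs beta eta * Pcol_iter t f eta = \sum_eta gibbs beta eta * f eta.
Proof. by move=> n_gt0; elim: t f => [|t IH] f //=; rewrite IH gibbs_Pcol_op. Qed.

Lemma law_Pcol_iter t xi f :
  \sum_eta law beta t xi eta * f eta = Pcol_iter t f xi.
Proof.
elim: t f => [|t IH] f /=; first by rewrite sumr_ifeq mul1r.
rewrite -IH (eq_bigr (fun eta' => \sum_eta law beta t xi eta * (Pcol beta eta eta' * f eta'))).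
  by rewrite exchange_big; apply: eq_bigr => eta _; rewrite -mulr_sumr.
by move=> eta' _; rewrite mulr_suml; apply: eq_bigr => eta _; rewrite mulrA.
Qed.

Lemma col_resample_avg f eta i :
  \sum_(j : 'I_n.+1) weight beta (update eta i j) / col_partition eta i * f (update eta i j) =
  col_avg (expR (- beta)) n (ht eta i) (ht eta i.+2) (fun k => f (update eta i (inord k))).
Proof.
set E := expR (- (beta * energy_off R eta i)).
set w := col_weight (expR (- beta)) (ht eta i) (ht eta i.+2).
have hZ : col_partition eta i = E * \sum_(j : 'I_n.+1) w j.
  by rewrite mulr_sumr; apply: eq_bigr => j _; rewrite weight_update.
have hS : 0 < \sum_(j : 'I_n.+1) w j.
  by rewrite -(big_mkord xpredT w) col_weight_sum_gt0 ?expR_gt0.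
rewrite /col_avg !big_mkord hZ mulr_suml.
apply: eq_bigr => j _; rewrite weight_update inord_val -/E -/w; field.
by rewrite !gt_eqF ?expR_gt0.
Qed.

Lemma Pcol_op_col_avg f eta :
  Pcol_op f eta = n%:R^-1 * \sum_(i : 'I_n)
    col_avg (expR (- beta)) n (ht eta i) (ht eta i.+2) (fun k => f (update eta i (inord k))).
Proof. by rewrite Pcol_opE; congr (_ * _); apply: eq_bigr => i _; exact: col_resample_avg. Qed.

End HeatBath.

Lemma sum_nat_shift (R : zmodType) (F : nat -> R) m : F 0%N = 0 -> F m = 0 ->
  \sum_(0 <= i < m) F i.+1 = \sum_(0 <= i < m) F i.
Proof.
move=> F0 Fm; apply: (@addrI _ (F 0%N)).
by rewrite -big_nat_recl // big_nat_recr //= F0 Fm add0r addr0.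
Qed.

Section WeightedDistance.
Variables (R : realType) (n : nat).
Implicit Types (eta : config n) (i : 'I_n).

Definition col_coef (k : nat) : R := (k * (n.+1 - k))%:R.

Definition wdist eta eta' : R :=
  \sum_(i : 'I_n) col_coef i.+1 * `|(eta i)%:R - (eta' i)%:R|.

Definition ht_dist eta eta' (k : nat) : R := (`|ht eta k - ht eta' k|%N)%:R.

Definition wlipschitz (L : R) (f : config n -> R) :=
  forall eta eta', f eta - f eta' <= L * wdist eta eta'.

Lemma col_coef_ge0 k : 0 <= col_coef k.
Proof. exact: ler0n. Qed.

Lemma col_coef_le i : col_coef i.+1 <= (n * n)%:R.
Proof. by rewrite ler_nat leq_mul //; lia. Qed.

Lemma col_coef_concave k : (k < n)%N -> col_coef k + col_coef k.+2 = 2 * col_coef k.+1 - 2.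
Proof.
move=> hk; apply: (@addIr _ 2); rewrite subrK /col_coef -!natrD -natrM; congr _%:R.
have [m ->] : exists m, n = (k + 1 + m)%N by exists (n - k - 1)%N; lia.
have -> : ((k + 1 + m).+1 - k = m.+2)%N by lia.
have -> : ((k + 1 + m).+1 - k.+2 = m)%N by lia.
have -> : ((k + 1 + m).+1 - k.+1 = m.+1)%N by lia.
nia.
Qed.

Lemma sum_col_coef_neighbours (x : nat -> R) : x 0%N = 0 -> x n.+1 = 0 ->
  \sum_(0 <= i < n) col_coef i.+1 * (x i + x i.+2) =
  \sum_(0 <= i < n) (2 * col_coef i.+1 - 2) * x i.+1.
Proof.
move=> x0 xn.
have e1 : \sum_(0 <= i < n) col_coef i.+2 * x i.+1 = \sum_(0 <= i < n) col_coef i.+1 * x i.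
  apply: (sum_nat_shift (F := fun k => col_coef k.+1 * x k)); first by rewrite x0 mulr0.
  by rewrite /col_coef subnn muln0 mul0r.
have e2 : \sum_(0 <= i < n) col_coef i * x i.+1 = \sum_(0 <= i < n) col_coef i.+1 * x i.+2.
  symmetry; apply: (sum_nat_shift (F := fun k => col_coef k * x k.+1)).
    by rewrite /col_coef mul0n mul0r.
  by rewrite xn mulr0.
have -> : \sum_(0 <= i < n) col_coef i.+1 * (x i + x i.+2) =
    \sum_(0 <= i < n) col_coef i.+2 * x i.+1 + \sum_(0 <= i < n) col_coef i * x i.+1.
  by rewrite e1 e2 -big_split; apply: eq_bigr => i _ /=; ring.
rewrite -big_split; apply: eq_big_nat => i /andP[_ hi] /=.
by rewrite -col_coef_concave //; ring.
Qed.

Lemma wdistE eta eta' : wdist eta eta' = \sum_(0 <= i < n) col_coef i.+1 * ht_dist eta eta' i.+1.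
Proof. by rewrite /wdist big_mkord; apply: eq_bigr => i _; rewrite /ht_dist !htS normr_natB. Qed.

Lemma wdist_ge0 eta eta' : 0 <= wdist eta eta'.
Proof. by apply: sumr_ge0 => i _; rewrite mulr_ge0 ?col_coef_ge0. Qed.

Lemma wdist_ge1 eta eta' : eta != eta' -> 1 <= wdist eta eta'.
Proof.
move=> neq; have [i hi] : exists i, eta i != eta' i.
  by apply/existsP; apply: contraNT neq => /existsPn h; apply/eqP/ffunP => i; apply/eqP/negPn.
rewrite /wdist (bigD1 i) //= -[X in X <= _]addr0 lerD //; last first.
  by apply: sumr_ge0 => k _; rewrite mulr_ge0 ?col_coef_ge0.
have := ltn_ord i; rewrite normr_natB /col_coef -natrM ler1n !muln_gt0 !lt0n distn_eq0.
by rewrite (inj_eq val_inj) hi andbT; lia.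
Qed.

Lemma wdist_le eta eta' : wdist eta eta' <= n%:R ^+ 4.
Proof.
rewrite /wdist (_ : n%:R ^+ 4 = \sum_(i : 'I_n) (n%:R ^+ 3 : R)); last first.
  by rewrite sumr_const card_ord -(mulr_natl (n%:R ^+ 3)) -exprS.
apply: ler_sum => i _; rewrite normr_natB /col_coef -natrM -natrX ler_nat.
have := ltn_ord i; have := ltn_ord (eta i); have := ltn_ord (eta' i).
rewrite expnSr => ha hb hi; apply: leq_mul; last by lia.
by rewrite expnS expn1; apply: leq_mul; lia.
Qed.

Lemma wdist_update2 eta eta' i j :
  wdist (update eta i j) (update eta' i j) =
    wdist eta eta' - col_coef i.+1 * ht_dist eta eta' i.+1.
Proof.
rewrite /wdist (bigD1 i) //= [X in _ = X - _](bigD1 i) //= !update_at subrr normr0 mulr0.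
rewrite add0r /ht_dist !htS normr_natB addrC addrK.
by apply: eq_bigr => k hk; rewrite !ffunE (negbTE hk).
Qed.

Lemma wdist_update eta i j j' :
  wdist (update eta i j) (update eta i j') = col_coef i.+1 * (`|j - j'|%N)%:R.
Proof.
rewrite /wdist (bigD1 i) //= !update_at normr_natB big1 ?addr0 // => k hk.
by rewrite !ffunE (negbTE hk) subrr normr0 mulr0.
Qed.

End WeightedDistance.

Section Contraction.
Variables (R : realType) (beta : R) (n : nat).
Hypothesis beta_gt0 : 0 < beta.
Implicit Types (eta : config n) (i : 'I_n) (f : config n -> R).

Local Notation q := (expR (- beta)).
Local Notation coef := (col_coef R n).
Local Notation hdist := (ht_dist R).

Let q_gt0 : 0 < q. Proof. exact: expR_gt0. Qed.
Let q_lt1 : q < 1. Proof. by rewrite expR_lt1 oppr_lt0. Qed.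

(* Split through the law of column [i] in [eta] applied to [f] updated in [eta']: the first
   difference sees only the columns other than [i], the second only the neighbours of [i]. *)
Lemma col_avg_update_le L f eta eta' i : 0 <= L -> wlipschitz L f ->
  col_avg q n (ht eta i) (ht eta i.+2) (fun k => f (update eta i (inord k))) -
  col_avg q n (ht eta' i) (ht eta' i.+2) (fun k => f (update eta' i (inord k))) <=
  L * (wdist R eta eta' - coef i.+1 * hdist eta eta' i.+1) +
  L * coef i.+1 * (hdist eta eta' i + hdist eta eta' i.+2) / 2.
Proof.
move=> L0 Hf.
set g := fun k => f (update eta i (inord k)); set g' := fun k => f (update eta' i (inord k)).
set a := ht eta i; set b := ht eta i.+2.
rewrite -[X in X <= _](subrKA (col_avg q n a b g')) lerD //.
  rewrite col_avgB; apply: (col_avg_le q_gt0) => k _.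
  by have := Hf (update eta i (inord k)) (update eta' i (inord k)); rewrite wdist_update2.
have c0 : 0 <= L * coef i.+1 by rewrite mulr_ge0 ?col_coef_ge0.
have ht_n := @ht_le n.
apply: le_trans (col_avg_lipschitz q_gt0 q_lt1 (ht_n _ _) (ht_n _ _) (ht_n _ _) (ht_n _ _) c0 _) _.
  move=> k k' hk hk'; have := Hf (update eta' i (inord k)) (update eta' i (inord k')).
  by rewrite wdist_update !inordK // mulrA.
by rewrite /ht_dist natrD.
Qed.

Lemma Pcol_op_contract L f : (0 < n)%N -> 0 <= L -> wlipschitz L f ->
  wlipschitz (L * (1 - (n%:R ^+ 3)^-1)) (Pcol_op beta f).
Proof.
move=> n_gt0 L0 Hf eta eta'.
have n_pos : (0 : R) < n%:R by rewrite ltr0n.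
set d := wdist R eta eta'; set x := hdist eta eta'; set S := \sum_(0 <= i < n) x i.+1.
pose F k := L * (d - coef k.+1 * x k.+1) + L * coef k.+1 * (x k + x k.+2) / 2.
have sumF : \sum_(0 <= k < n) F k = n%:R * L * d - L * S.
  rewrite (eq_bigr (fun k => (L * d - L * x k.+1) + L / 2 * (coef k.+1 * (x k + x k.+2) -
      (2 * coef k.+1 - 2) * x k.+1))); last by move=> k _; rewrite /F; field.
  rewrite big_split /= -mulr_sumr [X in L / 2 * X]sumrB.
  rewrite sum_col_coef_neighbours ?subrr ?mulr0 ?addr0.
  - by rewrite sumrB sumr_const_nat subn0 -mulr_sumr -mulrA mulr_natl.
  - by rewrite /x /ht_dist distnn.
  - by rewrite /x /ht_dist !ht_out.
have dS : d <= (n * n)%:R * S.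
  rewrite /d wdistE /S mulr_sumr; apply: ler_sum_nat => k /andP[_ hk].
  by rewrite ler_wpM2r ?ler0n // (col_coef_le _ (Ordinal hk)).
rewrite !Pcol_op_col_avg -mulrBr -sumrB.
apply: le_trans (ler_wpM2l _ (_ : _ <= \sum_(0 <= k < n) F k)) _.
- by rewrite invr_ge0 ltW.
- by rewrite big_mkord; apply: ler_sum => i _; exact: col_avg_update_le.
rewrite sumF -subr_ge0.
have -> : L * (1 - (n%:R ^+ 3)^-1) * d - n%:R^-1 * (n%:R * L * d - L * S) =
    L * ((n * n)%:R * S - d) / n%:R ^+ 3 by rewrite natrM; field; rewrite gt_eqF.
by rewrite divr_ge0 ?mulr_ge0 ?subr_ge0 ?exprn_ge0 // ltW.
Qed.

Lemma Pcol_iter_lipschitz L f t : (0 < n)%N -> 0 <= L -> wlipschitz L f ->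
  wlipschitz (L * (1 - (n%:R ^+ 3)^-1) ^+ t) (Pcol_iter beta t f).
Proof.
move=> n_gt0; have k0 : 0 <= 1 - (n%:R ^+ 3 : R)^-1.
  by rewrite subr_ge0 invf_le1 ?exprn_ege1 ?ler1n ?exprn_gt0 ?ltr0n.
elim: t f L => [|t IH] f L L0 Hf /=; first by rewrite expr0 mulr1.
by rewrite exprS mulrA; apply: IH; [exact: mulr_ge0 | exact: Pcol_op_contract].
Qed.

End Contraction.

Section Mixing.
Variables (R : realType) (beta : R) (n : nat).
Hypotheses (beta_gt0 : 0 < beta) (n_gt0 : (0 < n)%N).
Implicit Types (eta xi : config n) (f : config n -> R).

Lemma law_sub_gibbs t xi f :
  \sum_eta (law beta t xi eta - gibbs beta eta) * f eta =
  \sum_eta gibbs beta eta * (Pcol_iter beta t f xi - Pcol_iter beta t f eta).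
Proof.
under eq_bigr do rewrite mulrBl.
rewrite sumrB law_Pcol_iter -(gibbs_Pcol_iter _ t f n_gt0).
under [RHS]eq_bigr do rewrite mulrBr.
by rewrite [RHS]sumrB -mulr_suml gibbs_sum1 mul1r.
Qed.

Lemma wlipschitz_bounded f : (forall eta, `|f eta| <= 1) -> wlipschitz 2 f.
Proof.
move=> f1 eta eta'; case: (eqVneq eta eta') => [->|neq].
  by rewrite subrr mulr_ge0 ?wdist_ge0.
have := wdist_ge1 R neq; have := f1 eta; have := f1 eta'.
rewrite !ler_norml => /andP[? ?] /andP[? ?]; lra.
Qed.

Lemma tv_law_gibbs_le t xi :
  tv_dist (law beta t xi) (@gibbs R beta n) <= (1 - (n%:R ^+ 3)^-1) ^+ t * n%:R ^+ 4.
Proof.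
set c := (1 - (n%:R ^+ 3)^-1) ^+ t.
pose s eta : R := if gibbs beta eta <= law beta t xi eta then 1 else -1.
have abs_s eta :
    `|law beta t xi eta - gibbs beta eta| = (law beta t xi eta - gibbs beta eta) * s eta.
  rewrite /s; case: ifP => h; first by rewrite mulr1 ger0_norm // subr_ge0.
  by rewrite mulrN1 ler0_norm // subr_le0 ltW // ltNge h.
have Ls : wlipschitz 2 s.
  by apply: wlipschitz_bounded => eta; rewrite /s; case: ifP; rewrite ?normrN normr1.
have := Pcol_iter_lipschitz beta_gt0 t n_gt0 (ler0n R 2) Ls => Lt.
rewrite /tv_dist (eq_bigr _ (fun eta _ => abs_s eta)) law_sub_gibbs.
apply: le_trans (_ : 2^-1 * \sum_eta gibbs beta eta * (2 * c * n%:R ^+ 4) <= _).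
  rewrite ler_wpM2l // ?invr_ge0 ?ler0n //; apply: ler_sum => eta _.
  rewrite ler_wpM2l ?gibbs_ge0 //; apply: le_trans (Lt xi eta) _.
  rewrite ler_wpM2l ?wdist_le // mulr_ge0 ?exprn_ge0 // subr_ge0.
  by rewrite invf_le1 ?exprn_ege1 ?ler1n ?exprn_gt0 ?ltr0n.
by rewrite -mulr_suml gibbs_sum1 mul1r !mulrA mulVf ?pnatr_eq0 // mul1r.
Qed.

End Mixing.

Lemma expR1_ge2 (R : realType) : 2 <= expR (1 : R).
Proof. by have := expR_ge1Dx (1 : R); rewrite -[1 + 1]/2%:R. Qed.

Lemma expR1_le4 (R : realType) : expR (1 : R) <= 4.
Proof.
have h1 : 2^-1 <= expR (- 2^-1 : R) by have := expR_ge1Dx (- 2^-1 : R); lra.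
have h2 : expR (2^-1 : R) <= 2.
  have : expR (2^-1 : R) * expR (- 2^-1) = 1 by rewrite -expRD subrr expR0.
  by have := expR_gt0 (2^-1 : R); nra.
have -> : (1 : R) = 2^-1 + 2^-1 by field.
by rewrite expRD; have := expR_gt0 (2^-1 : R); nra.
Qed.

Lemma ln_nat_ge1 (R : realType) n : (4 <= n)%N -> 1 <= ln (n%:R : R).
Proof.
move=> n4; rewrite -ler_expR lnK ?posrE ?ltr0n; last by lia.
by apply: le_trans (expR1_le4 R) _; rewrite ler_nat.
Qed.

Lemma exprB_le_expR (R : realType) (k : R) t : 0 <= k <= 1 -> (1 - k) ^+ t <= expR (- (t%:R * k)).
Proof.
move=> /andP[k0 k1]; rewrite -mulrN expRM_natl lerXn2r ?nnegrE ?subr_ge0 ?expR_ge0 //.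
by have := expR_ge1Dx (- k); rewrite addrC.
Qed.

Definition mix_bound (R : realType) (n : nat) : nat :=
  (Num.truncn ((n%:R : R) ^+ 3 * (4 * ln (n%:R : R) + 2))).+1.

(* [(1 - n^-3)^t n^4 <= e^(-t/n^3) n^4 <= e^-2 <= 1/(2e)] as soon as [t >= n^3 (4 ln n + 2)]. *)
Lemma mixed_mix_bound (R : realType) (beta : R) n : 0 < beta -> (4 <= n)%N ->
  mixed beta n (mix_bound R n).
Proof.
move=> beta_gt0 n4 xi; have n_gt0 : (0 < n)%N by lia.
have n_pos : (0 : R) < n%:R by rewrite ltr0n.
have n3_pos : (0 : R) < n%:R ^+ 3 by exact: exprn_gt0.
have k01 : 0 <= (n%:R ^+ 3 : R)^-1 <= 1.
  by rewrite invr_ge0 ltW //= invf_le1 // exprn_ege1 // ler1n.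
apply: le_trans (tv_law_gibbs_le beta_gt0 n_gt0 _ xi) _.
apply: le_trans (ler_wpM2r (exprn_ge0 4 (ltW n_pos)) (exprB_le_expR _ k01)) _.
have e4 : expR (- (4 * ln (n%:R : R))) * n%:R ^+ 4 = 1.
  by rewrite -mulrN expRM_natl expRN lnK ?posrE // -exprMn mulVf ?expr1n // gt_eqF.
have e2 : expR (-2 : R) * expR 2 = 1 by rewrite -expRD addNr expR0.
have -> : (2 * expR 1)^-1 = expR (- (4 * ln (n%:R : R) + 2)) * n%:R ^+ 4 * (expR 2 / (2 * expR 1)).
  by rewrite opprD expRD [X in X * (_ / _)]mulrAC e4 mul1r mulrA e2 mul1r.
have n4_ge0 : (0 : R) <= n%:R ^+ 4 by rewrite exprn_ge0.
rewrite -[X in X <= _]mulr1 ler_pM ?mulr_ge0 ?expR_ge0 //.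
- rewrite ler_wpM2r // ler_expR lerN2 ler_pdivlMr // mulrC.
  exact/ltW/Num.Theory.truncnS_gt.
- have ee : expR (2 : R) = expR 1 * expR 1 by rewrite -expRD; congr expR; lra.
  rewrite ler_pdivlMr ?mul1r ?mulr_gt0 ?expR_gt0 // ee.
  by have := expR1_ge2 R; have := expR_gt0 (1 : R); nra.
Qed.

Lemma mix_bound_le (R : realType) n : (4 <= n)%N ->
  ((mix_bound R n)%:R : R) <= 7 * ((n%:R : R) ^+ 3 * ln (n%:R : R)).
Proof.
move=> n4; have l1 := ln_nat_ge1 R n4.
have n3 : (1 : R) <= n%:R ^+ 3 by rewrite exprn_ege1 // ler1n; lia.
have X0 : (0 : R) <= n%:R ^+ 3 * (4 * ln n%:R + 2) by rewrite mulr_ge0 ?exprn_ge0 //; lra.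
rewrite /mix_bound -natr1; have /andP[tX _] := Num.Theory.truncn_itv X0.
nra.
Qed.

Lemma mixing_time_le (R : realType) (beta : R) n t0 : mixed beta n t0 ->
  exists t, is_mixing_time beta n t /\ (t <= t0)%N.
Proof.
move=> mix0; have ex_mix : exists t, `[< mixed beta n t >] by exists t0; exact/asboolP.
case: (ex_minnP ex_mix) => t /asboolP mixt tmin; exists t; split; last exact/tmin/asboolP.
by split => // s st /asboolP /tmin; rewrite leqNgt st.
Qed.

Theorem theorem3p1 (R : realType) (beta : R) (hbeta : 0 < beta) :
  exists (C : R) (N : nat), 0 < C /\
    forall n : nat, (N <= n)%N ->
      exists t : nat, is_mixing_time beta n t /\
        (t%:R <= C * (n%:R ^+ 3 * ln (n%:R : R))).
Proof.
exists 7, 4%N; split => // n n4.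
have [t [tmix tle]] := mixing_time_le (mixed_mix_bound hbeta n4).
exists t; split => //; apply: le_trans _ (mix_bound_le R n4).
by rewrite ler_nat.
Qed.
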